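(* Let $p$ be any prime, $G=SL(2,\mathbb{Z}_p)$ and $T=\{F\in SL(2,\mathbb{Z}_p):\mathrm{Tr}(F)\neq 2\pmod p\}$. Then the clique number of the Cayley graph $\Gamma(G,T)$ satisfies $\omega(\Gamma(G,T))\geq p(p-1)$.
   Context: The Cayley graph $\Gamma(G,T)$ has vertex set $G$ and an edge between $g_1,g_2$ iff $g_1^{-1}g_2\in T$; thus $F_1,F_2$ are adjacent iff $\mathrm{Tr}(F_1^{-1}F_2)\neq 2 \pmod p$. The clique number $\omega$ is the largest size of a set of pairwise adjacent vertices. *)

From mathcomp Require Import all_boot all_order all_algebra all_fingroup.
Set Implicit Arguments. Unset Strict Implicit. Unset Printing Implicit Defensive.
Import GRing.Theory.
Local Open Scope ring_scope.

Definition SL2 (p : nat) : {set 'M['F_p]_2} := [set M : 'M['F_p]_2 | \det M == 1].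

Definition Tset (p : nat) : {set 'M['F_p]_2} :=
  [set F in SL2 p | \tr F != 2%:R].

Definition cayley_adj (p : nat) (F1 F2 : 'M['F_p]_2) : bool :=
  (invmx F1 *m F2) \in Tset p.

Definition is_clique (p : nat) (S : {set 'M['F_p]_2}) : bool :=
  (S \subset SL2 p) &&
  [forall F1 in S, forall F2 in S, (F1 != F2) ==> cayley_adj F1 F2].

Definition clique_number (p : nat) : nat :=
  \max_(S : {set 'M['F_p]_2} | is_clique S) #|S|.

(* For A, B of determinant 1 in a 2x2 matrix ring, tr (A^-1 B) = 2 - det (A - B), so a clique of
   the Cayley graph is a set of SL(2, p) matrices with pairwise invertible differences.
   For p odd pick a non-square r.  The matrices [[a, b], [-r b, (1 - r b^2) / a]], a <> 0,
   lie in SL(2, p), and a a' det (M - M') = r (a b' - a' b)^2 - (a - a')^2, which vanishes only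
   if a b' - a' b = a - a' = 0 because r is not a square, i.e. only if (a, b) = (a', b').
   This gives p (p - 1) pairwise adjacent vertices.  For p = 2 two adjacent vertices suffice. *)

From mathcomp Require Import all_boot all_order all_algebra all_fingroup.
From mathcomp Require Import ring.
Set Implicit Arguments.
Unset Strict Implicit.
Unset Printing Implicit Defensive.
Import GRing.Theory.
Local Open Scope ring_scope.

Section Mx22.
Variable R : comNzRingType.

Let lift_ord2E : (lift 0 0 = 1 :> 'I_2) * (lift 1 0 = 0 :> 'I_2).
Proof. by split; apply/val_inj. Qed.

Lemma det_mx22 (A : 'M[R]_2) : \det A = A 0 0 * A 1 1 - A 0 1 * A 1 0.
Proof.
rewrite (expand_det_row _ 0) !big_ord_recl big_ord0 /cofactor !det_mx11 !mxE /=.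
by rewrite !lift_ord2E expr0 expr1 mul1r mulN1r addr0 mulrN.
Qed.

Lemma mxtrace_adj_mul_mx22 (A B : 'M[R]_2) :
  \tr (\adj A *m B) = \det A + \det B - \det (A - B).
Proof.
rewrite !det_mx22 /mxtrace !big_ord_recl big_ord0 !mxE !big_ord_recl !big_ord0 !mxE.
by rewrite /cofactor !det_mx11 !mxE /= !lift_ord2E; ring.
Qed.

End Mx22.

Lemma exists_nonsquare (F : finFieldType) :
  (2%:R : F) != 0 -> exists r : F, forall x, x ^+ 2 != r.
Proof.
move=> two_neq0; set sq := fun x : F => x ^+ 2.
have sq_not_inj : ~~ (#|image sq F| == #|F|).
  apply/image_injP => /(_ 1 (-1) isT isT); rewrite /sq sqrrN => /(_ erefl) /eqP.
  by rewrite -subr_eq0 opprK -mulr2n (negbTE two_neq0).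
case: (pickP [pred r | r \notin codom sq]) => [r /= r_notin | all_in].
  by exists r => x; apply: contra r_notin => /eqP <-; apply: codom_f.
case/negP: sq_not_inj; rewrite eqn_leq max_card /=.
by apply/subset_leq_card/subsetP => r _; move/negbFE: (all_in r).
Qed.

Lemma Fp_two_neq0 p : prime p -> p != 2%N -> (2%:R : 'F_p) != 0.
Proof. by move=> p_pr; rewrite -(dvdn_pcharf (pchar_Fp p_pr)) dvdn_prime2. Qed.

Section SL2Param.
Variables (F : fieldType) (r : F).

Definition sl2_param (x : F * F) : 'M[F]_2 :=
  \matrix_(i, j) if i == 0 then (if j == 0 then x.1 else x.2)
                 else (if j == 0 then - r * x.2 else (1 - r * x.2 ^+ 2) / x.1).

Lemma det_sl2_param x : x.1 != 0 -> \det (sl2_param x) = 1.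
Proof. by move=> x1_neq0; rewrite det_mx22 !mxE /=; field. Qed.

Hypothesis r_nonsquare : forall x : F, x ^+ 2 != r.

Lemma det_sl2_param_sub_neq0 x y : x.1 != 0 -> y.1 != 0 -> x != y ->
  \det (sl2_param x - sl2_param y) != 0.
Proof.
case: x y => [a b] [a' b'] /= a_neq0 a'_neq0 xy_neq.
set u := a * b' - a' * b; set v := a - a'.
have detE : \det (sl2_param (a, b) - sl2_param (a', b')) * (a * a') = r * u ^+ 2 - v ^+ 2.
  by rewrite det_mx22 !mxE /= /u /v; field; rewrite a_neq0 a'_neq0.
apply: contra_neq xy_neq => det_eq0.
have ru2_v2 : r * u ^+ 2 = v ^+ 2 by apply/eqP; rewrite -subr_eq0 -detE det_eq0 mul0r.
have u_eq0 : u = 0.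
  apply/eqP; apply: contraT => u_neq0; have := r_nonsquare (v / u).
  by rewrite expr_div_n -ru2_v2 mulfK ?sqrf_eq0 ?eqxx.
have aa' : a = a' by apply/eqP; rewrite -subr_eq0 -sqrf_eq0 -ru2_v2 u_eq0 expr0n mulr0.
move: u_eq0; rewrite /u -aa' -mulrBr => /eqP.
by rewrite mulf_eq0 (negbTE a_neq0) subr_eq0 => /eqP ->.
Qed.

End SL2Param.

Definition sl2_family (F : finFieldType) (r : F) : {set 'M[F]_2} :=
  sl2_param r @: [set x : F * F | x.1 != 0].

Lemma card_sl2_family (F : finFieldType) (r : F) : (forall x : F, x ^+ 2 != r) ->
  #|sl2_family r| = ((#|F| - 1) * #|F|)%N.
Proof.
move=> r_nonsquare; rewrite card_in_imset.
  have -> : [set x : F * F | x.1 != 0] = setX [set~ 0] [set: F].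
    by apply/setP => -[a b]; rewrite !inE andbT.
  by rewrite cardsX cardsC1 cardsT subn1.
move=> x y; rewrite !inE => x1_neq0 y1_neq0; apply: contra_eq => xy_neq.
apply: contraNneq (det_sl2_param_sub_neq0 r_nonsquare x1_neq0 y1_neq0 xy_neq) => ->.
by rewrite subrr det0.
Qed.

Lemma cayley_adj_SL2 p (A B : 'M['F_p]_2) : A \in SL2 p -> B \in SL2 p ->
  cayley_adj A B = (\det (A - B) != 0).
Proof.
rewrite !inE => /eqP detA /eqP detB.
have invA : invmx A = \adj A by rewrite /invmx unitmxE detA unitr1 invr1 scale1r.
rewrite /cayley_adj !inE det_mulmx det_inv detA detB invr1 mulr1 eqxx /=.
by rewrite invA mxtrace_adj_mul_mx22 detA detB -[2%:R]subr0 (inj_eq (addrI _)) eqr_opp.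
Qed.

Lemma is_clique_SL2 p (S : {set 'M['F_p]_2}) : S \subset SL2 p ->
  {in S &, forall A B, A != B -> \det (A - B) != 0} -> is_clique S.
Proof.
move=> /subsetP sub_SL2 detS; rewrite /is_clique (introT subsetP sub_SL2) /=.
apply/forall_inP => A SA; apply/forall_inP => B SB; apply/implyP => AB.
by rewrite cayley_adj_SL2 ?sub_SL2 ?detS.
Qed.

Lemma clique_number_ge p (S : {set 'M['F_p]_2}) :
  is_clique S -> (#|S| <= clique_number p)%N.
Proof. exact: leq_bigmax_cond. Qed.

Lemma is_clique_sl2_family p (r : 'F_p) :
  (forall x : 'F_p, x ^+ 2 != r) -> is_clique (sl2_family r).
Proof.
move=> r_nonsquare; apply: is_clique_SL2.
  apply/subsetP => _ /imsetP[x x_dom ->]; move: x_dom; rewrite !inE => x1_neq0.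
  by rewrite det_sl2_param.
move=> _ _ /imsetP[x x_dom ->] /imsetP[y y_dom ->]; move: x_dom y_dom.
rewrite !inE => x1_neq0 y1_neq0 neq_xy.
by apply: det_sl2_param_sub_neq0 => //; apply: contraNneq neq_xy => ->.
Qed.

Lemma clique_number_F2 : (2 <= clique_number 2)%N.
Proof.
pose M : 'M['F_2]_2 := \matrix_(i, j) if (i == 0) && (j == 0) then 0 else 1.
have M_neq1 : 1 != M by apply/eqP => /matrixP /(_ 0 0); rewrite !mxE.
apply: (@leq_trans #|[set 1; M]|); first by rewrite cards2 M_neq1.
apply/clique_number_ge/is_clique_SL2.
  by apply/subsetP => A; rewrite !inE => /orP[] /eqP ->; rewrite ?det1 // det_mx22 !mxE.
move=> A B; rewrite !inE => /orP[] /eqP -> /orP[] /eqP ->;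
  by rewrite ?eqxx // det_mx22 !mxE.
Qed.

Local Close Scope ring_scope.

Theorem mainTheorem3 (p : nat) (hp : prime p) :
  p * (p - 1) <= clique_number p.
Proof.
have [-> | p_neq2] := eqVneq p 2; first exact: clique_number_F2.
have [r r_nonsquare] := exists_nonsquare (Fp_two_neq0 hp p_neq2).
rewrite mulnC -{1 2}(card_Fp hp) -(card_sl2_family r_nonsquare).
exact/clique_number_ge/is_clique_sl2_family.
Qed.
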